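(* Let $q\neq-1$ be real and let $0\le j\le n$ be integers. Then $$\sum_{k=0}^{\lfloor n/2\rfloor}q^{\binom{n-2k}{2}}\begin{bmatrix} n\\ 2k\end{bmatrix}_q\begin{bmatrix} k\\ j\end{bmatrix}_{q^2}=\frac{(1+q)\cdots(1+q^{n-1})}{(1+q)\cdots(1+q^{j})\cdot(1+q^{n-j})\cdots(1+q^{n-1})}\,\frac{[n]_q}{[n-j]_q}\begin{bmatrix} n-j\\ j\end{bmatrix}_q$$ and $$\sum_{k=0}^{\lfloor n/2\rfloor}q^{\binom{n-2k}{2}}\begin{bmatrix} n+1\\ 2k+1\end{bmatrix}_q\begin{bmatrix} k\\ j\end{bmatrix}_{q^2}=(1+q^{j+1})\cdots(1+q^{n-j})\begin{bmatrix} n-j\\ j\end{bmatrix}_q.$$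
   Context: For a parameter $p$: $[m]_p=1+p+\cdots+p^{m-1}$, $[m]_p!=[1]_p\cdots[m]_p$, $\begin{bmatrix} m\\ i\end{bmatrix}_p=\frac{[m]_p!}{[i]_p![m-i]_p!}$ for $0\le i\le m$ and $0$ otherwise (in particular for $m<0$ or $i>m$). Empty products equal $1$; $\binom{0}{2}=\binom{1}{2}=0$. When $n=j=0$ the factor $\frac{[n]_q}{[n-j]_q}$ is read as $1$. *)

From mathcomp Require Import all_boot all_order all_algebra.
Set Implicit Arguments. Unset Strict Implicit. Unset Printing Implicit Defensive.
Import Order.TTheory GRing.Theory Num.Theory.
Local Open Scope ring_scope.

Definition qint {R : ringType} (p : R) (m : nat) : R := \sum_(i < m) p ^+ i.
Definition qfact {R : ringType} (p : R) (m : nat) : R := \prod_(i < m) qint p i.+1.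
Definition qbinom {R : fieldType} (p : R) (m i : nat) : R :=
  if (i <= m)%N then qfact p m / (qfact p i * qfact p (m - i)) else 0.
(* The factor [n]_q/[n-j]_q, read as 1 when n = j (the paper: n=j=0 gives 1;
   for n=j>0 it multiplies a vanishing Gaussian binomial). *)
Definition qratio {R : fieldType} (q : R) (n j : nat) : R :=
  if (n - j == 0)%N then 1 else qint q n / qint q (n - j).

(* Let E_j(n) be the first sum and O_j(n) the second one with n+1 replaced by n,
   so that the second identity concerns O_j(n+1).  The q-Pascal rule gives the
   coupled recurrences
     O_j(n+1) = E_j(n) + q^n O_j(n),
     E_j(n+1) = q^n E_j(n) + O_(j-1)(n) + q^(2j) O_j(n).
   The closed form F_j(n) = (1+q^(j+1))...(1+q^(n-j)) [n-j choose j]_q satisfies the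
   matching three-term recurrence in n, so by induction O_j(n+1) = F_j(n) and
   E_j(n) = F_j(n) - q^n F_j(n-1); a short q-integer computation turns this
   difference into the first right-hand side. *)

From mathcomp Require Import all_boot all_order all_algebra.
From mathcomp Require Import ring zify.
Import Order.TTheory GRing.Theory Num.Theory.
Local Open Scope ring_scope.

Section QInt.
Context {R : comNzRingType} (p : R).

Lemma qint0 : qint p 0 = 0.
Proof. by rewrite /qint big_ord0. Qed.

Lemma qintS m : qint p m.+1 = qint p m + p ^+ m.
Proof. by rewrite /qint big_ord_recr. Qed.

Lemma qint1 : qint p 1 = 1.
Proof. by rewrite qintS qint0 add0r expr0. Qed.

Lemma qintD a b : qint p (a + b) = qint p a + p ^+ a * qint p b.
Proof.
elim: b => [|b IH]; first by rewrite addn0 qint0 mulr0 addr0.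
by rewrite addnS !qintS IH exprD; ring.
Qed.

Lemma qint_double a : qint p (2 * a) = qint p a * (1 + p ^+ a).
Proof. by rewrite mul2n -addnn qintD; ring. Qed.

Lemma expr_qint a : p ^+ a = 1 + (p - 1) * qint p a.
Proof.
elim: a => [|a IH]; first by rewrite qint0 expr0; ring.
by rewrite qintS exprS mulrDr IH; ring.
Qed.

Lemma qfact0 : qfact p 0 = 1.
Proof. by rewrite /qfact big_ord0. Qed.

Lemma qfactS m : qfact p m.+1 = qfact p m * qint p m.+1.
Proof. by rewrite /qfact big_ord_recr. Qed.

(* The recurrence [F_rec] at [n = 2j + m], cleared of denominators. *)
Lemma qint_rec_identity j m :
  p ^+ (2 * j + m).+1 * (qint p (2 * (j + m.+1)) * qint p m.+2
                         - p ^+ (2 * j + m).+1 * qint p m.+1 * qint p m.+2)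
  + qint p (2 * (j + m.+1)) * qint p (2 * j) + p ^+ (2 * j) * qint p m.+1 * qint p m.+2
  = qint p (2 * (j + m.+1)) * qint p (2 * (j + m.+2))
    - p ^+ (2 * j + m).+2 * qint p (2 * (j + m.+1)) * qint p m.+2.
Proof.
have sq k : p ^+ (2 * k) = (p ^+ k) ^+ 2 by rewrite mulnC exprM.
have qint2 : qint p 2 = 1 + p by rewrite qintS qint1 expr1.
have eA : qint p (2 * (j + m.+1)) = qint p j * (1 + p ^+ j)
    + (p ^+ j) ^+ 2 * (qint p m * (1 + p ^+ m) + (p ^+ m) ^+ 2 * (1 + p)).
  have -> : (2 * (j + m.+1) = 2 * j + (2 * m + 2))%N by lia.
  by rewrite qintD (qintD (2 * m)) !qint_double !sq qint2.
have eB : qint p (2 * (j + m.+2))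
    = qint p (2 * (j + m.+1)) + (p ^+ j) ^+ 2 * (p ^+ m) ^+ 2 * p ^+ 2 * (1 + p).
  have -> : (2 * (j + m.+2) = 2 * j + 2 * m + 2 + 2)%N by lia.
  rewrite qintD qint2 (exprD _ (2 * j + 2 * m)) (exprD _ (2 * j)) !sq.
  by rewrite (_ : 2 * j + 2 * m + 2 = 2 * (j + m.+1))%N //; lia.
have e1 : p ^+ (2 * j + m).+1 = (p ^+ j) ^+ 2 * p ^+ m * p by rewrite exprS exprD sq; ring.
have e2 : p ^+ (2 * j + m).+2 = (p ^+ j) ^+ 2 * p ^+ m * p ^+ 2.
  by rewrite !exprS exprD sq; ring.
rewrite e1 e2 eB eA !qintS qint_double sq (exprS p m) (expr_qint j) (expr_qint m).
ring.
Qed.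

End QInt.

Lemma qbinom_eq0 {R : fieldType} (p : R) m i : (m < i)%N -> qbinom p m i = 0.
Proof. by move=> ltmi; rewrite /qbinom leqNgt ltmi. Qed.

Lemma sqr_neqN1 {R : realDomainType} (x : R) : x ^+ 2 != -1.
Proof.
apply/eqP => x2N1; have := sqr_ge0 x.
by rewrite x2N1 oppr_ge0 leNgt ltr01.
Qed.

Section QBinom.
Context {R : realFieldType} (p : R).
Hypothesis pN1 : p != -1.

(* [(p - 1) [m]_p = p^m - 1], and in an ordered field [p^m = 1] forces [p = 1] or [p = -1]. *)
Lemma qint_neq0 m : (0 < m)%N -> qint p m != 0.
Proof.
move=> m_gt0; apply/eqP => qint0.
have pm1 : p ^+ m = 1 by rewrite expr_qint qint0 mulr0 addr0.
have [p_ge0|p_lt0] := lerP 0 p.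
  have /eqP p1 : p == 1 by rewrite -(pexpr_eq1 m_gt0 p_ge0) pm1.
  move: qint0; rewrite p1 /qint.
  under eq_bigr do rewrite expr1n.
  by rewrite sumr_const card_ord => /eqP; rewrite pnatr_eq0 => /eqP m0; rewrite m0 in m_gt0.
have : `|p| ^+ m == 1 by rewrite -normrX pm1 normr1.
rewrite (pexpr_eq1 m_gt0 (normr_ge0 p)) ltr0_norm // => /eqP Np1.
by move: pN1; rewrite -Np1 opprK eqxx.
Qed.

Lemma qfact_neq0 m : qfact p m != 0.
Proof.
elim: m => [|m IH]; first by rewrite qfact0 oner_neq0.
by rewrite qfactS mulf_neq0 // qint_neq0.
Qed.

Lemma add1X_neq0 i : 1 + p ^+ i != 0.
Proof.
case: i => [|i]; first by rewrite expr0 (_ : 1 + 1 = 2%:R) // pnatr_eq0.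
by have := @qint_neq0 (2 * i.+1) isT; rewrite qint_double mulf_eq0 negb_or => /andP[].
Qed.

Lemma prod_add1X_neq0 a b : \prod_(a <= i < b) (1 + p ^+ i) != 0.
Proof. by rewrite prodf_seq_neq0; apply/allP => i _; apply: add1X_neq0. Qed.

Lemma prod_add1X_ratio a b c d : (a <= b <= c)%N -> (c <= d)%N ->
  (\prod_(a <= i < d) (1 + p ^+ i))
    / ((\prod_(a <= i < b) (1 + p ^+ i)) * \prod_(c <= i < d) (1 + p ^+ i))
  = \prod_(b <= i < c) (1 + p ^+ i).
Proof.
move=> /andP[le_ab le_bc] le_cd.
rewrite (big_cat_nat le_ab (leq_trans le_bc le_cd)) (big_cat_nat le_bc le_cd) /=.
have := prod_add1X_neq0 a b; have := prod_add1X_neq0 c d.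
by move=> *; field; apply/andP.
Qed.

Lemma qbinomn0 m : qbinom p m 0 = 1.
Proof. by rewrite /qbinom leq0n qfact0 mul1r subn0 divff // qfact_neq0. Qed.

Lemma qbinomnn m : qbinom p m m = 1.
Proof. by rewrite /qbinom leqnn subnn qfact0 mulr1 divff // qfact_neq0. Qed.

Lemma qbinom_succ_top j m :
  qbinom p (j + m).+1 j = qbinom p (j + m) j * qint p (j + m).+1 / qint p m.+1.
Proof.
rewrite /qbinom (_ : (j + m).+1 - j = m.+1)%N; last by lia.
rewrite addKn !ifT; try lia.
rewrite !qfactS.
have := qfact_neq0 j; have := qfact_neq0 m; have := @qint_neq0 m.+1 isT.
by move=> *; field; apply/and3P.
Qed.

Lemma qbinomSS m i :
  qbinom p m.+1 i.+1 = qbinom p m i + p ^+ i.+1 * qbinom p m i.+1.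
Proof.
have [lt_im|lt_mi|->] := ltngtP i m; last by rewrite !qbinomnn // qbinom_eq0 // mulr0 addr0.
- have [d ->] : exists d, m = (i.+1 + d)%N by exists (m - i.+1)%N; rewrite subnKC.
  rewrite /qbinom (_ : (i.+1 + d).+1 - i.+1 = d.+1)%N; last by lia.
  rewrite (_ : i.+1 + d - i = d.+1)%N; last by lia.
  rewrite addKn !ifT; try lia.
  rewrite (qfactS p (i.+1 + d)) (qfactS p i) (qfactS p d) -addnS qintD.
  have := qfact_neq0 (i.+1 + d); have := qfact_neq0 i; have := qfact_neq0 d.
  have := @qint_neq0 i.+1 isT; have := @qint_neq0 d.+1 isT.
  by move=> *; field; apply/and4P.
- by rewrite !qbinom_eq0 ?ltnS ?mulr0 ?addr0 // ltnW.
Qed.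

Lemma qbinomS m i :
  qbinom p m.+1 i = (if i is i'.+1 then qbinom p m i' else 0) + p ^+ i * qbinom p m i.
Proof. by case: i => [|i]; rewrite ?qbinomSS // !qbinomn0 expr0 mul1r add0r. Qed.

End QBinom.

Lemma bin2S a : 'C(a.+1, 2) = ('C(a, 2) + a)%N.
Proof. by rewrite binS bin1. Qed.

Lemma sum_ord_vanishing {R : nmodType} (f : nat -> R) M N : (M <= N)%N ->
  (forall k, (M <= k)%N -> f k = 0) -> \sum_(k < N) f k = \sum_(k < M) f k.
Proof.
move=> le_MN f0; rewrite (big_ord_widen N f le_MN) [RHS]big_mkcond /=.
by apply: eq_bigr => k _; case: ltnP => // /f0.
Qed.

Section EvenOddSums.
Context {R : realFieldType} (q : R).
Hypothesis qN1 : q != -1.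

Definition eterm n k := q ^+ 'C(n - 2 * k, 2) * qbinom q n (2 * k).
Definition oterm n k := q ^+ 'C(n - (2 * k).+1, 2) * qbinom q n (2 * k).+1.
Definition Esum n j := \sum_(k < n.+1) eterm n k * qbinom (q ^+ 2) k j.
Definition Osum n j := \sum_(k < n.+1) oterm n k * qbinom (q ^+ 2) k j.

Lemma eterm_eq0 n k : (n < 2 * k)%N -> eterm n k = 0.
Proof. by move=> lt_nk; rewrite /eterm qbinom_eq0 ?mulr0. Qed.

Lemma oterm_eq0 n k : (n < (2 * k).+1)%N -> oterm n k = 0.
Proof. by move=> lt_nk; rewrite /oterm qbinom_eq0 ?mulr0. Qed.

Lemma oterm_rec n k : oterm n.+1 k = eterm n k + q ^+ n * oterm n k.
Proof.
rewrite /oterm /eterm qbinomSS // subSS.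
have [lt_n2k|le_2kn] := ltnP n (2 * k).+1.
  by rewrite (qbinom_eq0 q n (2 * k).+1) // !mulr0 !addr0.
have binE : ('C(n - 2 * k, 2) + (2 * k).+1 = n + 'C(n - (2 * k).+1, 2))%N.
  by rewrite (_ : n - 2 * k = (n - (2 * k).+1).+1)%N ?bin2S; lia.
by rewrite mulrDr mulrA -exprD binE exprD; ring.
Qed.

Lemma eterm_rec0 n : eterm n.+1 0 = q ^+ n * eterm n 0.
Proof. by rewrite /eterm muln0 !subn0 !qbinomn0 // bin2S exprD; ring. Qed.

Lemma eterm_recS n k : eterm n.+1 k.+1 = oterm n k + q ^+ n * eterm n k.+1.
Proof.
rewrite /oterm /eterm (_ : 2 * k.+1 = (2 * k).+2)%N; last by lia.
rewrite qbinomSS // subSS.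
have [lt_n2k|le_2kn] := ltnP n (2 * k).+2.
  by rewrite (qbinom_eq0 q n (2 * k).+2) // !mulr0 !addr0.
have binE : ('C(n - (2 * k).+1, 2) + (2 * k).+2 = n + 'C(n - (2 * k).+2, 2))%N.
  by rewrite (_ : n - (2 * k).+1 = (n - (2 * k).+2).+1)%N ?bin2S; lia.
by rewrite mulrDr mulrA -exprD binE exprD; ring.
Qed.

Lemma Osum_rec n j : Osum n.+1 j = Esum n j + q ^+ n * Osum n j.
Proof.
rewrite /Osum /Esum.
under eq_bigr do rewrite oterm_rec mulrDl -mulrA.
rewrite big_split /= -mulr_sumr.
rewrite (@sum_ord_vanishing _ (fun k => eterm n k * qbinom (q ^+ 2) k j) n.+1) //; last first.
  by move=> k lt_nk; rewrite eterm_eq0 ?mul0r //; lia.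
rewrite (@sum_ord_vanishing _ (fun k => oterm n k * qbinom (q ^+ 2) k j) n.+1) //.
by move=> k lt_nk; rewrite oterm_eq0 ?mul0r //; lia.
Qed.

Lemma Esum_rec n j : Esum n.+1 j =
  q ^+ n * Esum n j + (if j is j'.+1 then Osum n j' else 0) + q ^+ (2 * j) * Osum n j.
Proof.
have Osum_shift : \sum_(k < n.+1) oterm n k * qbinom (q ^+ 2) k.+1 j
    = (if j is j'.+1 then Osum n j' else 0) + q ^+ (2 * j) * Osum n j.
  under eq_bigr do rewrite qbinomS ?sqr_neqN1 // -exprM mulrDr mulrCA.
  rewrite big_split -mulr_sumr; congr (_ + _).
  by case: j => [|j] //; rewrite big1 // => k _; rewrite mulr0.
have Esum_shift : Esum n j = eterm n 0 * qbinom (q ^+ 2) 0 j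
    + \sum_(k < n.+1) eterm n k.+1 * qbinom (q ^+ 2) k.+1 j.
  rewrite /Esum big_ord_recl big_ord_recr /= (@eterm_eq0 n n.+1) ?mul0r ?addr0; last by lia.
  by congr (_ + _); apply: eq_bigr => i _; rewrite /bump leq0n add1n.
rewrite {1}/Esum big_ord_recl eterm_rec0.
under eq_bigr do rewrite lift0 eterm_recS mulrDl -mulrA.
rewrite big_split /= Osum_shift -mulr_sumr Esum_shift mulrDr mulrA -!addrA; congr (_ + _).
by rewrite addrA addrC.
Qed.

Definition Fx j m := (\prod_(i < m) qint q (2 * (j + i.+1))) / qfact q m.
Definition F n j := if (2 * j <= n)%N then Fx j (n - 2 * j) else 0.
Definition Fprev n j := if n is n'.+1 then F n' j else 0.

Lemma Fx0 j : Fx j 0 = 1.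
Proof. by rewrite /Fx big_ord0 qfact0 divr1. Qed.

Lemma FxS j m : Fx j m.+1 = Fx j m * qint q (2 * (j + m.+1)) / qint q m.+1.
Proof. by rewrite /Fx big_ord_recr qfactS invfM /=; ring. Qed.

Lemma Fx1 j : Fx j 1 = qint q (2 * j.+1).
Proof. by rewrite FxS Fx0 qint1 divr1 mul1r addn1. Qed.

Lemma FxSl j m : Fx j m.+1 = Fx j.+1 m * qint q (2 * j.+1) / qint q m.+1.
Proof.
rewrite /Fx big_ord_recl qfactS invfM /= addn1.
under eq_bigr => i _ do rewrite /bump leq0n add1n -addSnnS.
ring.
Qed.

Lemma Fx_closed j m :
  Fx j m = (\prod_(j.+1 <= i < (j + m).+1) (1 + q ^+ i)) * qbinom q (j + m) j.
Proof.
elim: m => [|m IH]; first by rewrite Fx0 addn0 big_geq // qbinomnn // mulr1.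
rewrite FxS IH addnS [in RHS]big_nat_recr /=; last by lia.
by rewrite qbinom_succ_top // -addnS qint_double addnS; ring.
Qed.

Lemma F_Fx n j m : n = (2 * j + m)%N -> F n j = Fx j m.
Proof. by move=> ->; rewrite /F leq_addr addKn. Qed.

Lemma F_eq0 n j : (n < 2 * j)%N -> F n j = 0.
Proof. by move=> lt_n2j; rewrite /F leqNgt lt_n2j. Qed.

Lemma F_closed n j :
  F n j = (\prod_(j.+1 <= i < (n - j).+1) (1 + q ^+ i)) * qbinom q (n - j) j.
Proof.
have [lt_n2j|le_2jn] := ltnP n (2 * j).
  by rewrite F_eq0 // qbinom_eq0 ?mulr0 //; lia.
rewrite (@F_Fx n j (n - 2 * j)) ?Fx_closed; last by lia.
by rewrite (_ : j + (n - 2 * j) = n - j)%N; last by lia.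
Qed.

Lemma F_rec n j :
  F n.+2 j - q ^+ n.+2 * F n.+1 j
  = q ^+ n.+1 * (F n.+1 j - q ^+ n.+1 * F n j)
    + (if j is j'.+1 then F n j' else 0) + q ^+ (2 * j) * F n j.
Proof.
have [lt_n2j|le_2jn] := ltnP n (2 * j); last first.
  have [m ->] : exists m, n = (2 * j + m)%N by exists (n - 2 * j)%N; lia.
  have F0 : F (2 * j + m) j = Fx j m by apply: F_Fx.
  have F1 : F (2 * j + m).+1 j = Fx j m.+1 by apply: F_Fx; lia.
  have F2 : F (2 * j + m).+2 j = Fx j m.+2 by apply: F_Fx; lia.
  have -> : (if j is j'.+1 then F (2 * j + m) j' else 0)
      = Fx j m * qint q (2 * (j + m.+1)) / qint q m.+1 * qint q (2 * j) / qint q m.+2.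
    case: j {le_2jn F0 F1 F2} => [|j]; first by rewrite muln0 qint0 mulr0 mul0r.
    rewrite (@F_Fx _ j m.+2); last by lia.
    by rewrite FxSl FxS.
  rewrite F0 F1 F2 !FxS.
  have c1N0 := qint_neq0 q qN1 m.+1 isT; have c2N0 := qint_neq0 q qN1 m.+2 isT.
  transitivity (Fx j m / (qint q m.+1 * qint q m.+2) *
    (qint q (2 * (j + m.+1)) * qint q (2 * (j + m.+2))
     - q ^+ (2 * j + m).+2 * qint q (2 * (j + m.+1)) * qint q m.+2)).
    by field; rewrite c1N0 c2N0.
  by rewrite -qint_rec_identity; field; rewrite c1N0 c2N0.
case: j lt_n2j => [|j] lt_n2j; first by lia.
rewrite (F_eq0 _ _ lt_n2j) !mulr0 subr0 addr0.
have [lt_n2j'|le_2jn] := ltnP n (2 * j).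
  by rewrite !F_eq0 ?mulr0 ?subr0 ?addr0 //; lia.
move: lt_n2j; have [m ->] : exists m, n = (2 * j + m)%N by exists (n - 2 * j)%N; lia.
case: m => [|[|m]] lt_n2j; last by lia.
- rewrite (@F_Fx _ j.+1 0) ?(@F_Fx _ j 0) ?F_eq0 ?Fx0; try lia.
  by rewrite !mulr0 subr0 add0r.
- have F0 : F (2 * j + 1) j = qint q (2 * j.+1) by rewrite -Fx1; apply: F_Fx.
  have F1 : F (2 * j + 1).+1 j.+1 = 1 by rewrite -(Fx0 j.+1); apply: F_Fx; lia.
  have F2 : F (2 * j + 1).+2 j.+1 = qint q (2 * j.+2) by rewrite -Fx1; apply: F_Fx; lia.
  rewrite F0 F1 F2 (_ : 2 * j.+2 = (2 * j.+1).+2)%N; last by lia.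
  rewrite (_ : (2 * j + 1).+1 = 2 * j.+1)%N; last by lia.
  by rewrite (qintS q (2 * j.+1).+1) (qintS q (2 * j.+1)); ring.
Qed.

Lemma Esum_Osum n j : Esum n j = F n j - q ^+ n * Fprev n j /\ Osum n j = Fprev n j.
Proof.
elim: n j => [|n IH] j.
  rewrite /Esum /Osum !big_ord1 /eterm /oterm (qbinom_eq0 q 0 1) // qbinomn0 //.
  rewrite mulr0 mul0r mulr1 /= subr0 muln0 bin0n expr0 mul1r; split=> //.
  case: j => [|j]; last by rewrite qbinom_eq0 ?F_eq0.
  by rewrite qbinomn0 ?sqr_neqN1 // (F_Fx 0 0 0) ?Fx0.
have [IHE IHO] := IH j.
have Osum_next : Osum n.+1 j = F n j by rewrite Osum_rec IHE IHO; ring.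
split=> //; rewrite Esum_rec IHE IHO.
have -> : (if j is j'.+1 then Osum n j' else 0) = (if j is j'.+1 then Fprev n j' else 0).
  by case: j {IHE IHO Osum_next} => [|j] //; case: (IH j).
case: n {IH IHE IHO Osum_next} => [|n]; last by rewrite /= F_rec.
case: j => [|j] /=; last by rewrite !F_eq0; try lia; ring.
rewrite (F_Fx 0 0 0) ?(F_Fx 1 0 1) ?Fx0 ?Fx1 //.
by rewrite qint_double qint1 expr0; ring.
Qed.

Lemma Fdiff_closed_gt j m : F (2 * j + m).+1 j - q ^+ (2 * j + m).+1 * F (2 * j + m) j
  = (\prod_(j.+1 <= i < (j + m).+1) (1 + q ^+ i)) * qbinom q (j + m).+1 j
    * (qint q (2 * j + m).+1 / qint q (j + m).+1).
Proof.
rewrite (@F_Fx _ j m.+1) ?(@F_Fx _ j m) // ?FxS ?Fx_closed ?qbinom_succ_top //; last by lia.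
have -> : qint q (2 * (j + m.+1)) = qint q (2 * j + m).+1 + q ^+ (2 * j + m).+1 * qint q m.+1.
  by rewrite -qintD; congr qint; lia.
have := qint_neq0 q qN1 m.+1 isT; have := qint_neq0 q qN1 (j + m).+1 isT.
by move=> *; field; apply/andP.
Qed.

Lemma Fprev_eq0 n j : (n <= 2 * j)%N -> Fprev n j = 0.
Proof. by case: n => //= n le_n2j; rewrite F_eq0. Qed.

Lemma Fdiff_closed n j : (j <= n)%N ->
  F n j - q ^+ n * Fprev n j
  = (\prod_(1 <= i < n) (1 + q ^+ i))
     / ((\prod_(1 <= i < j.+1) (1 + q ^+ i)) * (\prod_(n - j <= i < n) (1 + q ^+ i)))
     * qratio q n j * qbinom q (n - j) j.
Proof.
move=> le_jn; have [lt_n2j|] := ltnP n (2 * j).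
  rewrite Fprev_eq0 ?F_eq0 ?qbinom_eq0 ?mulr0 ?subr0 //; lia.
move=> /subnKC <-; set m := (n - 2 * j)%N; case: m => [|m].
  rewrite addn0 Fprev_eq0 // (F_Fx _ _ 0) ?addn0 // Fx0 mulr0 subr0.
  rewrite (_ : 2 * j - j = j)%N; last by lia.
  rewrite qbinomnn // mulr1.
  case: j {le_jn} => [|j]; first by rewrite /qratio !big_geq ?mulr1 ?divr1.
  rewrite /qratio ifF; last by apply/eqP; lia.
  rewrite (_ : 2 * j.+1 - j.+1 = j.+1)%N; last by lia.
  rewrite (big_nat_recr j.+1 1) // (@big_cat_nat _ _ _ j.+1 1 (2 * j.+1)) //=; last by lia.
  rewrite qint_double.
  have := prod_add1X_neq0 q qN1 1 j.+1; have := prod_add1X_neq0 q qN1 j.+1 (2 * j.+1).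
  have := add1X_neq0 q qN1 j.+1; have := qint_neq0 q qN1 j.+1 isT.
  by move=> *; field; apply/and4P.
rewrite addnS Fdiff_closed_gt /= prod_add1X_ratio //; try lia.
rewrite /qratio ifF; last by apply/eqP; lia.
rewrite (_ : (2 * j + m).+1 - j = (j + m).+1)%N; last by lia.
by rewrite mulrAC.
Qed.
End EvenOddSums.


Theorem theorem2p8 (R : realFieldType) (q : R) (n j : nat) :
  q != -1 -> (j <= n)%N ->
  (\sum_(0 <= k < (n./2).+1)
      q ^+ 'C(n - 2 * k, 2) * qbinom q n (2 * k) * qbinom (q ^+ 2) k j
   = (\prod_(1 <= i < n) (1 + q ^+ i))
     / ((\prod_(1 <= i < j.+1) (1 + q ^+ i)) * (\prod_(n - j <= i < n) (1 + q ^+ i)))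
     * qratio q n j * qbinom q (n - j) j)
  /\
  (\sum_(0 <= k < (n./2).+1)
      q ^+ 'C(n - 2 * k, 2) * qbinom q n.+1 (2 * k).+1 * qbinom (q ^+ 2) k j
   = (\prod_(j.+1 <= i < (n - j).+1) (1 + q ^+ i)) * qbinom q (n - j) j).
Proof.
move=> qN1 le_jn.
have le_half : ((n./2).+1 <= n.+1)%N by rewrite ltnS leq_half_double -addnn; apply/leqW/leq_addr.
have half_lt k : ((n./2).+1 <= k)%N -> (n < 2 * k)%N by rewrite mul2n -ltn_half_double.
have [Esum_eq _] := Esum_Osum q qN1 n j.
have [_ Osum_eq] := Esum_Osum q qN1 n.+1 j.
split.
  rewrite big_mkord -Fdiff_closed // -Esum_eq /Esum.
  rewrite (sum_ord_vanishing (fun k => eterm q n k * qbinom (q ^+ 2) k j) _ _ le_half) //.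
  by move=> k /half_lt lt_n2k; rewrite eterm_eq0 ?mul0r.
rewrite big_mkord -F_closed // -[F q n j]/(Fprev q n.+1 j) -Osum_eq /Osum.
rewrite (sum_ord_vanishing (fun k => oterm q n.+1 k * qbinom (q ^+ 2) k j) _ _ (leqW le_half)) //.
by move=> k /half_lt lt_n2k; rewrite oterm_eq0 ?mul0r.
Qed.
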